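(* Let $w,w_1,w_2\in\{\mathrm{cla},\mathrm{sup},\mathrm{sta}\}$ be types, $g$ a generating function that is $w_1$-approximating with respect to $w$, $t$ a witness function that is $w_2$-ensuring with respect to $w$, and $\Pi$ a program. Then the set of all stable models of $\Pi$ equals $$\{L_{|\mathrm{atoms}(\Pi)} \mid L \text{ is a } w_1\text{-model of } g(\Pi) \text{ and } t(\Pi,L) \text{ has no } w_2\text{-models}\}.$$
   Context: Literals are atoms $a$ or negations $\neg a$. For a conjunction (resp. disjunction) $D$ of literals, viewed as a set, $\overline{D}$ is the disjunction (resp. conjunction) of the complements of its elements; as a set, the set of these complements. A set of literals is consistent if it contains no literal together with its complement. For a set $L$ of literals, $\mathrm{atoms}(L)$ is the set of atoms occurring in $L$, $L^+$ the set of atoms occurring positively in $L$, and for a set $X$ of atoms $L_{|X}$ is the set of literals of $L$ whose atom is in $X$; $L$ is complete over $X$ if $\mathrm{atoms}(L)=X$. A consistent set of literals is identified with the assignment making its positive atoms true and negated atoms false. A program $\Pi$ is a finite set of rules $A\leftarrow B$, with head $A$ a possibly empty disjunction (set) of atoms and body $B$ an expression $a_1,\dots,a_j,\ not\ a_{j+1},\dots,not\ a_k$, identified with the conjunction of literals $a_1\wedge\dots\wedge a_j\wedge\neg a_{j+1}\wedge\dots\wedge\neg a_k$; non-disjunctive if all heads have at most one atom. A rule $A\leftarrow B$ is identified with the clause $A\vee\overline B$. $\mathrm{atoms}(\Pi)$ is the set of atoms of $\Pi$. The reduct $\Pi^X$ deletes each rule whose negative body part contains an atom of $X$ and removes the negative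 body part from the remaining rules; $X$ is an answer set of $\Pi$ if it is minimal among sets of atoms satisfying $\Pi^X$. A rule $A\vee a\leftarrow B$ is supporting for $a$ w.r.t. $L$ if $L\cap(\overline B\cup A)=\emptyset$. A consistent $L$ complete over $\mathrm{atoms}(\Pi)$ is a $\mathrm{cla}$-model (classical model) if it satisfies every rule, a $\mathrm{sup}$-model if additionally every $a\in L^+$ has a supporting rule w.r.t. $L$, and a $\mathrm{sta}$-model (stable model) if $L^+$ is an answer set of $\Pi$. A generating function $g$ maps each program $\Pi$ to a program $g(\Pi)$ with $\mathrm{atoms}(\Pi)\subseteq\mathrm{atoms}(g(\Pi))$. A set $M$ covers $\Pi$ if $\mathrm{atoms}(\Pi)\subseteq\mathrm{atoms}(M)$. A witness function $t$ maps a program $\Pi$ and a consistent set $M$ of literals covering $\Pi$ to a non-disjunctive program $t(\Pi,M)$. $g$ is $w_1$-approximating w.r.t. $w$ if for every program $\Pi$: (1) for every stable model $L$ of $\Pi$ there is a $w_1$-model $L_1$ of $g(\Pi)$ with $L=(L_1)_{|\mathrm{atoms}(\Pi)}$; (2) for every $w_1$-model $M$ of $g(\Pi)$, $M_{|\mathrm{atoms}(\Pi)}$ is a $w$-model of $\Pi$. $t$ is $w_1$-ensuring w.r.t. $w$ if for every program $\Pi$ and every consistent set $M$ of literals covering $\Pi$ with $M_{|\mathrm{atoms}(\Pi)}$ a $w$-model of $\Pi$: $M_{|\mathrm{atoms}(\Pi)}$ is a stable model of $\Pi$ iff $t(\Pi,M)$ has no $w_1$-model. *)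

From Stdlib Require Import List.
Import ListNotations.
Set Implicit Arguments.

Section ASP.
Variable A : Type.

Inductive lit : Type := Pos (a : A) | Neg (a : A).

Definition atom_of (l : lit) : A := match l with Pos a => a | Neg a => a end.

(* A rule  head <- pbody, not nbody ; head is a disjunction (set) of atoms. *)
Record rule : Type := Rule { head : list A; pbody : list A; nbody : list A }.

Definition program := list rule.

Definition lits := lit -> Prop.

Definition non_disjunctive (P : program) : Prop :=
  forall r, In r P -> length (head r) <= 1.

Definition atoms (P : program) (a : A) : Prop :=
  exists r, In r P /\ (In a (head r) \/ In a (pbody r) \/ In a (nbody r)).

Definition atoms_L (L : lits) (a : A) : Prop := L (Pos a) \/ L (Neg a).

Definition posL (L : lits) (a : A) : Prop := L (Pos a).

Definition restrict (L : lits) (X : A -> Prop) : lits :=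
  fun l => L l /\ X (atom_of l).

Definition consistent (L : lits) : Prop := forall a, ~ (L (Pos a) /\ L (Neg a)).

Definition complete_over (L : lits) (X : A -> Prop) : Prop :=
  forall a, atoms_L L a <-> X a.

Definition covers (M : lits) (P : program) : Prop :=
  forall a, atoms P a -> atoms_L M a.

(* L satisfies the clause  head \/ complement(body) *)
Definition sat_rule (L : lits) (r : rule) : Prop :=
  (exists a, In a (head r) /\ L (Pos a)) \/
  (exists b, In b (pbody r) /\ L (Neg b)) \/
  (exists c, In c (nbody r) /\ L (Pos c)).

Definition cla_model (P : program) (L : lits) : Prop :=
  consistent L /\ complete_over L (atoms P) /\ forall r, In r P -> sat_rule L r.

Definition supporting (L : lits) (a : A) (r : rule) : Prop :=
  In a (head r) /\
  (forall b, In b (pbody r) -> ~ L (Neg b)) /\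
  (forall c, In c (nbody r) -> ~ L (Pos c)) /\
  (forall h, In h (head r) -> h <> a -> ~ L (Pos h)).

Definition sup_model (P : program) (L : lits) : Prop :=
  cla_model P L /\ forall a, L (Pos a) -> exists r, In r P /\ supporting L a r.

Definition sat_reduct (P : program) (X Y : A -> Prop) : Prop :=
  forall r, In r P ->
    (forall c, In c (nbody r) -> ~ X c) ->
    (forall b, In b (pbody r) -> Y b) ->
    exists h, In h (head r) /\ Y h.

Definition answer_set (P : program) (X : A -> Prop) : Prop :=
  sat_reduct P X X /\
  forall Y : A -> Prop, (forall a, Y a -> X a) -> sat_reduct P X Y ->
    forall a, X a -> Y a.

Definition sta_model (P : program) (L : lits) : Prop :=
  consistent L /\ complete_over L (atoms P) /\ answer_set P (posL L).

End ASP.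

Inductive mtype : Type := Cla | Sup | Sta.

Definition model (w : mtype) {A : Type} (P : program A) (L : lits A) : Prop :=
  match w with
  | Cla => cla_model P L
  | Sup => sup_model P L
  | Sta => sta_model P L
  end.

Definition generating_fun {A : Type} (g : program A -> program A) : Prop :=
  forall P a, atoms P a -> atoms (g P) a.

Definition witness_fun {A : Type} (t : program A -> lits A -> program A) : Prop :=
  forall P M, consistent M -> covers M P -> non_disjunctive (t P M).

Definition approximating {A : Type} (g : program A -> program A) (w1 w : mtype) : Prop :=
  forall P : program A,
    (forall L, sta_model P L ->
       exists L1, model w1 (g P) L1 /\ L = restrict L1 (atoms P)) /\
    (forall M, model w1 (g P) M -> model w P (restrict M (atoms P))).

Definition ensuring {A : Type} (t : program A -> lits A -> program A) (w2 w : mtype) : Prop :=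
  forall (P : program A) (M : lits A), consistent M -> covers M P ->
    model w P (restrict M (atoms P)) ->
    (sta_model P (restrict M (atoms P)) <-> forall N, ~ model w2 (t P M) N).

From Stdlib Require Import FunctionalExtensionality PropExtensionality.

(** Every model of g(P) covers P and restricts to a w-model of P, so the
    ensuring property of t applies to it: its restriction is stable exactly
    when t(P, L1) has no w2-model.  Approximation supplies such an L1 for
    every stable model of P. *)

Lemma model_consistent_complete {A : Type} {w : mtype} {P : program A} {L : lits A} :
  model w P L -> consistent L /\ complete_over L (atoms P).
Proof.
  destruct w; simpl.
  - intros [Hcons [Hcomp _]]; split; assumption.
  - intros [[Hcons [Hcomp _]] _]; split; assumption.
  - intros [Hcons [Hcomp _]]; split; assumption.
Qed.

Lemma generated_model_covers {A : Type} {w : mtype} {g : program A -> program A}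
  (P : program A) {L : lits A} :
  generating_fun g -> model w (g P) L -> consistent L /\ covers L P.
Proof.
  intros Hg HL.
  destruct (model_consistent_complete HL) as [Hcons Hcomp].
  split; [exact Hcons |].
  intros a Ha; apply Hcomp, Hg, Ha.
Qed.

Lemma stable_restrict_iff_no_witness_model {A : Type} {w w1 w2 : mtype}
  {g : program A -> program A} {t : program A -> lits A -> program A}
  (P : program A) {L1 : lits A} :
  generating_fun g -> approximating g w1 w -> ensuring t w2 w ->
  model w1 (g P) L1 ->
  (sta_model P (restrict L1 (atoms P)) <-> forall N, ~ model w2 (t P L1) N).
Proof.
  intros Hg Hap Hen HL1.
  destruct (generated_model_covers P Hg HL1) as [Hcons Hcov].
  exact (Hen P L1 Hcons Hcov (proj2 (Hap P) L1 HL1)).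
Qed.

Theorem proposition4 (A : Type) (w w1 w2 : mtype)
  (g : program A -> program A) (t : program A -> lits A -> program A)
  (P : program A) :
  generating_fun g -> witness_fun t ->
  approximating g w1 w -> ensuring t w2 w ->
  (fun L : lits A => sta_model P L) =
  (fun L : lits A => exists L1 : lits A,
      model w1 (g P) L1 /\ (forall N, ~ model w2 (t P L1) N) /\
      L = restrict L1 (atoms P)).
Proof.
  intros Hg _ Hap Hen.
  apply functional_extensionality; intro L.
  apply propositional_extensionality; split.
  - intros HL.
    destruct (proj1 (Hap P) L HL) as [L1 [HL1 ->]].
    exists L1; split; [exact HL1 | split; [| reflexivity]].
    apply (stable_restrict_iff_no_witness_model P Hg Hap Hen HL1), HL.
  - intros [L1 [HL1 [Hno ->]]].
    apply (stable_restrict_iff_no_witness_model P Hg Hap Hen HL1), Hno.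
Qed.
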